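(* Let $R$ be a commutative Noetherian ring with unity, $\lambda$ a length function on $R$-modules, $S=R[x_1,\dots,x_k]$, $N$ an $S$-module and $V_0\le N$ an $R$-submodule which is finitely generated as an $R$-module and satisfies $\lambda(V_0)<\infty$. Let $G_{V_0}(t)=\sum_{n\in\mathbb{N}}\lambda(S_nV_0)t^n$. Then each $\lambda(S_nV_0)$ is finite, and there exists a polynomial $p(t)\in\mathbb{R}[t]$ such that \[G_{V_0}(t)=\frac{p(t)}{(1-t)^{k+1}}.\]
   Context: A length function on $R$-modules is a function $\lambda$ from $R$-modules to $\mathbb{R}_{\ge0}\cup\{\infty\}$ with $\lambda(0)=0$, invariant under isomorphism, additive on short exact sequences, and with $\lambda(M)=\sup\{\lambda(M'):M'\le M$ finitely generated$\}$. $S_n$ is the $R$-module of polynomials in $S$ of total degree at most $n$, and $S_nV_0$ is the $R$-submodule of $N$ generated by the products $pv$, $p\in S_n$, $v\in V_0$. *)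

From HB Require Import structures.
From mathcomp Require Import all_boot all_order all_algebra.
From mathcomp Require Import mpoly.
From mathcomp Require Import reals constructive_ereal.
Set Implicit Arguments. Unset Strict Implicit. Unset Printing Implicit Defensive.
Import Order.TTheory GRing.Theory Num.Theory.
Local Open Scope ring_scope.

Section Submodules.
Variables (R : pzRingType) (M : lmodType R).

Definition submodule (A : M -> Prop) : Prop :=
  [/\ A 0, (forall x y, A x -> A y -> A (x + y)) &
      (forall (r : R) x, A x -> A (r *: x))].

Definition rspan (G : M -> Prop) : M -> Prop :=
  fun x => exists (m : nat) (c : 'I_m -> R) (g : 'I_m -> M),
      (forall i, G (g i)) /\ x = \sum_(i < m) c i *: g i.

Definition fin_gen (A : M -> Prop) : Prop :=
  exists (m : nat) (g : 'I_m -> M),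
    forall x, A x <-> exists c : 'I_m -> R, x = \sum_(i < m) c i *: g i.

End Submodules.

Definition noetherian (R : comNzRingType) : Prop :=
  forall I : R^o -> Prop, submodule I -> fin_gen I.

(* We encode it on submodules: [lam M A] is lambda of the R-module A, where
   A is an R-submodule of the R-module M (lambda(M) itself is [lam M setT]).
   Short exact sequences 0 -> A' -> A -> A'' -> 0 are given by linear maps
   f : M' -> M, g : M -> M'' restricting to an exact sequence on A', A, A''. *)
Section Length.
Variables (RR : realType) (R : comNzRingType).

Definition is_length_function
    (lam : forall M : lmodType R, (M -> Prop) -> \bar RR) : Prop :=
  [/\
      (forall (M : lmodType R) (A : M -> Prop), submodule A -> (0 <= lam M A)%E),
      (forall M : lmodType R, lam M (fun x => x = 0) = 0%E),
      (forall (M M' : lmodType R) (f : {linear M -> M'}) (A : M -> Prop)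
              (A' : M' -> Prop),
          submodule A -> submodule A' ->
          (forall x y, A x -> A y -> f x = f y -> x = y) ->
          (forall y, A' y <-> exists2 x, A x & y = f x) ->
          lam M' A' = lam M A),
      (forall (M' M M'' : lmodType R) (f : {linear M' -> M}) (g : {linear M -> M''})
              (A' : M' -> Prop) (A : M -> Prop) (A'' : M'' -> Prop),
          submodule A' -> submodule A -> submodule A'' ->
          (forall x, A' x -> A (f x)) ->
          (forall x y, A' x -> A' y -> f x = f y -> x = y) ->
          (forall y, A'' y <-> exists2 x, A x & y = g x) ->
          (forall y, (A y /\ g y = 0) <-> exists2 x, A' x & y = f x) ->
          lam M A = (lam M' A' + lam M'' A'')%E) &
      (forall (M : lmodType R) (A : M -> Prop), submodule A ->
          (forall B, submodule B -> fin_gen B -> (forall x, B x -> A x) ->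
             (lam M B <= lam M A)%E) /\
          (forall e : \bar RR,
             (forall B, submodule B -> fin_gen B -> (forall x, B x -> A x) ->
                (lam M B <= e)%E) -> (lam M A <= e)%E))].

End Length.

Section Restr.
Variables (R : comNzRingType) (k : nat) (N : lmodType ({mpoly R[k]})).

Definition restr : Type := N.
HB.instance Definition _ := GRing.Zmodule.on restr.

Definition restr_scale (r : R) (v : restr) : restr := (mpolyC k r) *: (v : N).

Lemma restr_scaleA a b (v : restr) :
  restr_scale a (restr_scale b v) = restr_scale (a * b) v.
Proof. by rewrite /restr_scale scalerA rmorphM. Qed.

Lemma restr_scale1 : left_id 1 restr_scale.
Proof. by move=> v; rewrite /restr_scale rmorph1 scale1r. Qed.

Lemma restr_scaleDr : right_distributive restr_scale +%R.
Proof. by move=> a u v; rewrite /restr_scale scalerDr. Qed.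

Lemma restr_scaleDl (v : restr) :
  {morph restr_scale^~ v : a b / a + b}.
Proof. by move=> a b; rewrite /restr_scale rmorphD scalerDl. Qed.

HB.instance Definition _ := GRing.Zmodule_isLmodule.Build R restr
  restr_scaleA restr_scale1 restr_scaleDr restr_scaleDl.

End Restr.

Definition deg_le (R : comNzRingType) (k : nat) (p : {mpoly R[k]}) (n : nat) : Prop :=
  forall m : 'X_{1..k}, mcoeff m p != 0 -> (mdeg m <= n)%N.

Definition SnV (R : comNzRingType) (k : nat) (N : lmodType ({mpoly R[k]}))
    (n : nat) (V0 : restr N -> Prop) : restr N -> Prop :=
  rspan (fun y : restr N =>
    exists (p : {mpoly R[k]}) (v : restr N),
      [/\ deg_le p n, V0 v & y = (p *: (v : N) : restr N)]).

Definition series_mul (RR : ringType) (a b : nat -> RR) : nat -> RR :=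
  fun n => \sum_(i < n.+1) a i * b (n - i)%N.

(* Equality of formal power series  sum_n a_n t^n = p(t) / q(t)  in RR[[t]],
   for q with invertible constant term: it means  (sum_n a_n t^n) * q = p. *)
Definition series_eq_frac (RR : ringType) (a : nat -> RR) (p q : {poly RR}) : Prop :=
  series_mul a (fun n => q`_n) = (fun n => p`_n).

(* Let g_1, ..., g_m generate V_0 and order the pairs t = (mu, j) lexicographically, with a
   degree-compatible monomial order on mu.  Adding the vectors x^mu g_j one at a time in this
   order, lambda(S_n V_0) telescopes into the sum, over the pairs with |mu| <= n, of the jumps
   lambda((P_t + R x^mu g_j) / P_t), P_t being the span of the earlier vectors; all lengths
   are finite since each x^mu g_j lies in the image of V_0.  The jump at t is determined by
   the colon ideal I_t = {r | r x^mu g_j \in P_t}: multiplication by x_l maps P_t into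
   P_{t + e_l}, so I_t grows with mu, and the jump does not change along an edge where I_t
   does not grow.  Since R is Noetherian, induction on k then shows that the sum of the jumps
   over |mu| = d is eventually a polynomial in d of degree < k.  So lambda(S_n V_0) is
   eventually a polynomial of degree <= k in n, i.e. the (k+1)-st difference of the Hilbert
   function, which is the coefficient sequence of (1 - t)^(k+1) G(t), vanishes eventually. *)

From HB Require Import structures.
From mathcomp Require Import all_boot all_order all_algebra.
From mathcomp Require Import mpoly.
From mathcomp Require Import boolp reals constructive_ereal.
From mathcomp Require Import zify ring lra.
Set Implicit Arguments. Unset Strict Implicit. Unset Printing Implicit Defensive.
Import Order.TTheory GRing.Theory Num.Theory Order.DefaultProdLexiOrder.
Local Open Scope ring_scope.

Definition ascending T (le : T -> T -> Prop) (s : nat -> T) :=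
  forall n, le (s n) (s n.+1).

Definition acc_cond T (le : T -> T -> Prop) (valid : T -> Prop) :=
  forall s : nat -> T, (forall n, valid (s n)) -> ascending le s ->
  exists N, forall n, (N <= n)%N -> le (s n) (s N).

Section AscendingChains.
Variables (T : Type) (le : T -> T -> Prop) (valid : T -> Prop).
Hypotheses (le_refl : forall x, le x x)
           (le_trans : forall x y z, le x y -> le y z -> le x z).

Lemma ascending_le s : ascending le s -> forall a b, (a <= b)%N -> le (s a) (s b).
Proof.
move=> s_asc a b; elim: b => [|b IHb]; first by rewrite leqn0 => /eqP->.
rewrite leq_eqVlt => /orP[/eqP->//|]; rewrite ltnS => /IHb le_ab.
exact: le_trans le_ab (s_asc b).
Qed.

Lemma stable_from s N N' : ascending le s ->
  (forall n, (N <= n)%N -> le (s n) (s N)) -> (N <= N')%N ->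
  forall n, (N' <= n)%N -> le (s n) (s N').
Proof.
move=> s_asc stN le_NN' n le_N'n.
exact: le_trans (stN n (leq_trans le_NN' le_N'n)) (ascending_le s_asc le_NN').
Qed.

Lemma acc_cond_columns (F : nat -> nat -> T) n N0 :
  acc_cond le valid -> (forall i t, valid (F i t)) -> (forall t, ascending le (F^~ t)) ->
  exists2 N, (N0 <= N)%N &
    forall t, (t < n)%N -> forall i, (N <= i)%N -> le (F i t) (F N t).
Proof.
move=> acc vF col; elim: n => [|n [N le_N0N stN]]; first by exists N0.
have [M stM] := acc (F^~ n) (vF^~ n) (col n).
exists (maxn N M); first by rewrite (leq_trans le_N0N) ?leq_maxl.
move=> t; rewrite ltnS leq_eqVlt => /orP[/eqP->|lt_tn].
  exact: stable_from (col n) stM (leq_maxr _ _).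
exact: stable_from (col t) (stN t lt_tn) (leq_maxl _ _).
Qed.

(* Row i stabilizes at t_row i, and the diagonal values F i (t_row i) form an ascending
   chain stabilizing at i0; past i0 only the finitely many columns t < t_row i0 remain. *)
Lemma acc_cond_ascending_seqs : acc_cond le valid ->
  acc_cond (fun u w : nat -> T => forall t, le (u t) (w t))
           (fun u => (forall t, valid (u t)) /\ ascending le u).
Proof.
move=> acc F vF incF.
have rowP i : exists t, forall t', (t <= t')%N -> le (F i t') (F i t).
  by case: (vF i) => vFi ascFi; apply: acc.
pose t_row i := sval (cid (rowP i)).
have le_row i t : le (F i t) (F i (t_row i)).
  case: (leqP (t_row i) t) => [|/ltnW]; first exact: (svalP (cid (rowP i))).
  by apply: ascending_le; case: (vF i).
have col t : ascending le (F^~ t) by move=> i; apply: incF.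
have [i0 st_diag] : exists i0, forall i, (i0 <= i)%N -> le (F i (t_row i)) (F i0 (t_row i0)).
  apply: acc => [i|i]; first by case: (vF i).
  exact: le_trans (incF i (t_row i)) (le_row i.+1 (t_row i)).
have [N le_i0N st_cols] := acc_cond_columns (t_row i0) i0 acc (fun i t => (vF i).1 t) col.
exists N => i le_Ni t; case: (ltnP t (t_row i0)) => [lt_t|le_row_t]; first exact: st_cols.
apply: le_trans (le_row i t) _; apply: le_trans (st_diag i (leq_trans le_i0N le_Ni)) _.
apply: le_trans (ascending_le (col t) le_i0N).
by apply: ascending_le le_row_t; case: (vF i0).
Qed.

End AscendingChains.

Section MonotoneFamilies.
Variables (T : Type) (le : T -> T -> Prop) (valid : T -> Prop).
Hypotheses (le_refl : forall x, le x x)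
           (le_trans : forall x y z, le x y -> le y z -> le x z).

(* Families indexed by N^k are encoded as functions on the lists of size k. *)
Definition le_size k (F G : seq nat -> T) := forall a, size a = k -> le (F a) (G a).

Definition monotone_size k (F : seq nat -> T) :=
  (forall a, size a = k -> valid (F a)) /\
  (forall a, size a = k -> forall i, (i < k)%N -> le (F a) (F (incr_nth a i))).

Lemma monotone_size_cons k F t : monotone_size k.+1 F -> monotone_size k (fun a => F (t :: a)).
Proof.
case=> vF mF; split=> [a sz_a|a sz_a i lt_ik]; first by apply: vF; rewrite /= sz_a.
by have := mF (t :: a) _ i.+1; rewrite /= sz_a; apply.
Qed.

Lemma monotone_size_head k F a : monotone_size k.+1 F -> size a = k ->
  ascending le (fun t => F (t :: a)).
Proof. by case=> _ mF sz_a t; have := mF (t :: a) _ 0; rewrite /= sz_a; apply. Qed.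

(* A relative of Dickson's lemma. *)
Lemma acc_cond_monotone_size k :
  acc_cond le valid -> acc_cond (le_size k) (monotone_size k).
Proof.
move=> acc; elim: k => [|k IHk] F vF incF.
  have [N stN] := acc (F^~ [::]) (fun n => (vF n).1 [::] erefl) (fun n => incF n [::] erefl).
  by exists N => n le_Nn [|//] _; apply: stN.
have le_size_refl G : le_size k G G by [].
have le_size_trans G1 G2 G3 : le_size k G1 G2 -> le_size k G2 G3 -> le_size k G1 G3.
  by move=> h12 h23 a sz_a; exact: le_trans (h12 a sz_a) (h23 a sz_a).
have := acc_cond_ascending_seqs le_size_refl le_size_trans IHk
  (s := fun i t a => F i (t :: a)); case.
- move=> i; split=> [t|t a sz_a]; first exact: monotone_size_cons.
  exact: monotone_size_head (vF i) sz_a t.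
- by move=> i t a sz_a; apply: incF; rewrite /= sz_a.
move=> N stN; exists N => n le_Nn [|t a] //= [sz_a]; exact: stN le_Nn t a sz_a.
Qed.

End MonotoneFamilies.

Section Differences.
Variable V : zmodType.
Implicit Types h : nat -> V.

(* The convention h (-1) = 0 makes [bdiff] the multiplication of generating series by 1 - t. *)
Definition bdiff h n := h n - (if n is n'.+1 then h n' else 0).

Definition ev_zero h := exists N, forall n, (N <= n)%N -> h n = 0.

(* For V = RR: h n is eventually a polynomial in n of degree < k. *)
Definition ev_poly k h := ev_zero (iter k bdiff h).

Definition delay t h n := if (t <= n)%N then h (n - t)%N else 0.

Definition psum h n := \sum_(i < n.+1) h i.

Lemma bdiffD h1 h2 : bdiff (fun n => h1 n + h2 n) = (fun n => bdiff h1 n + bdiff h2 n).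
Proof. by apply: funext => -[|n]; rewrite /bdiff ?subr0 // opprD addrACA. Qed.

Lemma iter_bdiffD k h1 h2 :
  iter k bdiff (fun n => h1 n + h2 n) = (fun n => iter k bdiff h1 n + iter k bdiff h2 n).
Proof. by elim: k => [//|k IHk]; rewrite !iterS IHk bdiffD. Qed.

Lemma iter_bdiff0 k : iter k bdiff (fun _ => 0) = (fun _ => 0 : V).
Proof.
elim: k => [//|k IHk]; rewrite iterS IHk.
by apply: funext => -[|n]; rewrite /bdiff subr0.
Qed.

Lemma ev_poly0 k : ev_poly k (fun _ => 0).
Proof. by rewrite /ev_poly iter_bdiff0; exists 0%N. Qed.

Lemma ev_polyD k h1 h2 : ev_poly k h1 -> ev_poly k h2 -> ev_poly k (fun n => h1 n + h2 n).
Proof.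
rewrite /ev_poly iter_bdiffD => -[N1 ev1] [N2 ev2]; exists (maxn N1 N2) => n.
by rewrite geq_max => /andP[le1 le2]; rewrite ev1 ?ev2 ?addr0.
Qed.

Lemma ev_poly_sum k I (r : seq I) (H : I -> nat -> V) :
  (forall i, ev_poly k (H i)) -> ev_poly k (fun n => \sum_(i <- r) H i n).
Proof.
move=> evH; elim: r => [|i r IHr].
  by under [fun n => _]funext do rewrite big_nil; exact: ev_poly0.
by under [fun n => _]funext do rewrite big_cons; exact: ev_polyD.
Qed.

Lemma ev_polyS k h : ev_poly k h -> ev_poly k.+1 h.
Proof.
rewrite /ev_poly iterS => -[N evN]; exists N.+1 => -[//|n] lt_Nn.
by rewrite /bdiff !evN ?subr0 // ltnW.
Qed.

Lemma bdiff_delay t h : bdiff (delay t h) = delay t (bdiff h).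
Proof.
apply: funext => -[|n]; rewrite /bdiff /delay.
  by case: t => [|t] //=; rewrite subr0.
case: (ltngtP t n.+1) => [lt_tn|lt_nt|->]; last by rewrite subnn ltnn subr0.
  by rewrite -ltnS lt_tn subSn.
by rewrite leqNgt (ltn_trans (ltnSn n) lt_nt) subr0.
Qed.

Lemma ev_poly_delay k t h : ev_poly k h -> ev_poly k (delay t h).
Proof.
rewrite /ev_poly; have -> : iter k bdiff (delay t h) = delay t (iter k bdiff h).
  by elim: k => [//|k IHk]; rewrite !iterS IHk bdiff_delay.
move=> [N evN]; exists (N + t)%N => n le_n.
by rewrite /delay; case: ifP => // _; apply: evN; lia.
Qed.

Lemma bdiff_psum h : bdiff (psum h) = h.
Proof.
apply: funext => -[|n]; rewrite /bdiff /psum; first by rewrite big_ord1 subr0.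
by rewrite big_ord_recr /= addrAC subrr add0r.
Qed.

Lemma ev_poly_psum k h : ev_poly k h -> ev_poly k.+1 (psum h).
Proof. by rewrite /ev_poly iterSr bdiff_psum. Qed.

End Differences.

Arguments bdiff {V} h n.

Fixpoint compositions (k n : nat) : seq (seq nat) :=
  if k is k'.+1 then
    flatten [seq [seq t :: a | a <- compositions k' (n - t)] | t <- iota 0 n.+1]
  else if n == 0%N then [:: [::]] else [::].

Lemma compositionsS k n : compositions k.+1 n =
  flatten [seq [seq t :: a | a <- compositions k (n - t)] | t <- iota 0 n.+1].
Proof. by []. Qed.

Lemma mem_compositions k n a : (a \in compositions k n) = (size a == k) && (sumn a == n).
Proof.
elim: k n a => [|k IHk] n a; first by case: a => [|x a]; case: n.
rewrite compositionsS; apply/flattenP/andP => [[s /mapP[t t_in ->] /mapP[b b_in ->]]|].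
  move: t_in b_in; rewrite mem_iota ltnS IHk => /andP[_ le_tn] /andP[/eqP <- /eqP sum_b].
  by split=> //=; rewrite sum_b subnKC.
case: a => [[]//|t a [/eqP[sz_a] /eqP sum_a]].
exists [seq t :: b | b <- compositions k (n - t)].
  by apply/mapP; exists t; rewrite // mem_iota add0n ltnS -sum_a /= leq_addr.
by apply/mapP; exists a; rewrite // IHk sz_a -sum_a addKn !eqxx.
Qed.

Lemma uniq_compositions k n : uniq (compositions k n).
Proof.
elim: k n => [|k IHk] n; first by case: n.
rewrite compositionsS.
elim: (iota 0 n.+1) (iota_uniq 0 n.+1) => [//|t s IHs] /= /andP[t_s uniq_s].
rewrite cat_uniq IHs // andbT map_inj_uniq ?IHk; last by move=> x y [].
apply/hasPn => _ /flattenP[_ /mapP[t' t's ->] /mapP[b _ ->]].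
by apply/mapP => -[b' _ [eq_t _]]; move: t_s; rewrite -eq_t t's.
Qed.

Section CompositionSums.
Variable V : zmodType.

Definition comp_sum k (c : seq nat -> V) n := \sum_(a <- compositions k n) c a.

Lemma comp_sum0 c n : comp_sum 0 c n = if n == 0%N then c [::] else 0.
Proof. by rewrite /comp_sum; case: n => [|n]; rewrite ?big_seq1 ?big_nil. Qed.

Lemma comp_sumS k c n :
  comp_sum k.+1 c n = \sum_(t < n.+1) comp_sum k (fun a => c ((t : nat) :: a)) (n - t).
Proof.
rewrite -(big_mkord xpredT (fun t => comp_sum k (fun a => c (t :: a)) (n - t))).
by rewrite /comp_sum compositionsS big_flatten big_map; apply: eq_bigr => t _; rewrite big_map.
Qed.

Lemma antidiag_sum_eventually_const (H : nat -> nat -> V) t0 n :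
  (forall t, (t0 <= t)%N -> H t = H t0) ->
  \sum_(t < n.+1) H t (n - t)%N =
  \sum_(t < t0) delay t (H t) n + delay t0 (psum (H t0)) n.
Proof.
move=> H_t0; rewrite /delay -(big_mkord xpredT (fun t => H t (n - t)%N)).
case: (leqP t0 n) => [le_t0n|lt_nt0].
  rewrite (@big_cat_nat _ _ _ t0) ?leqW //= big_mkord; congr (_ + _).
    by apply: eq_bigr => i _; rewrite (leq_trans (ltnW (ltn_ord i)) le_t0n).
  rewrite /psum -(big_mkord xpredT (H t0)) big_nat_rev /= -{1}(add0n t0) big_addn.
  rewrite subSn //; apply: eq_big_nat => i /andP[_ lt_i].
  by rewrite H_t0 ?leq_addl //; f_equal; lia.
rewrite addr0 -(big_mkord xpredT (fun t => if (t <= n)%N then H t (n - t)%N else 0)).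
rewrite (@big_cat_nat _ _ _ n.+1 0 t0) //= [X in _ = _ + X]big1_seq ?addr0.
  by apply: eq_big_nat => i /andP[_]; rewrite ltnS => ->.
by move=> i /andP[_]; rewrite mem_iota => /andP[lt_ni _]; rewrite leqNgt lt_ni.
Qed.

Variables (T : Type) (le : T -> T -> Prop) (valid : T -> Prop).
Hypotheses (le_refl : forall x, le x x)
           (le_trans : forall x y z, le x y -> le y z -> le x z)
           (acc : acc_cond le valid).

Definition constant_on_stable k (c : seq nat -> V) (f : seq nat -> T) :=
  forall a, size a = k -> forall i, (i < k)%N ->
  le (f (incr_nth a i)) (f a) -> c a = c (incr_nth a i).

Lemma constant_on_stable_cons k c f t :
  constant_on_stable k.+1 c f -> constant_on_stable k (fun a => c (t :: a)) (fun a => f (t :: a)).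
Proof. by move=> cf a sz_a i lt_ik; have := cf (t :: a) _ i.+1; rewrite /= sz_a; apply. Qed.

Lemma constant_on_stable_head k c f :
  monotone_size le valid k.+1 f -> constant_on_stable k.+1 c f ->
  exists t0, forall a, size a = k -> forall t, (t0 <= t)%N -> c (t :: a) = c (t0 :: a).
Proof.
move=> mf cf.
have := acc_cond_monotone_size le_refl le_trans (k := k) acc (s := fun t a => f (t :: a)); case.
- by move=> t; exact: monotone_size_cons.
- by move=> t a sz_a; exact: monotone_size_head mf sz_a t.
move=> t0 st_t0; exists t0 => a sz_a; elim=> [|t IHt]; first by rewrite leqn0 => /eqP->.
rewrite leq_eqVlt => /orP[/eqP<-//|]; rewrite ltnS => le_t0t.
rewrite -IHt //; symmetry; have := cf (t :: a) _ 0; rewrite /= sz_a; apply=> //.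
apply: le_trans (st_t0 t.+1 (leqW le_t0t) a sz_a) _.
exact: (ascending_le le_refl le_trans (monotone_size_head mf sz_a) le_t0t).
Qed.

(* Induction on k: past the index t0 where the first coordinate stabilizes, the slices
   t :: _ all contribute the same sequence, whose delayed partial sums gain one degree. *)
Lemma ev_poly_comp_sum k (c : seq nat -> V) (f : seq nat -> T) :
  monotone_size le valid k f -> constant_on_stable k c f -> ev_poly k (comp_sum k c).
Proof.
elim: k c f => [|k IHk] c f mf cf.
  by exists 1%N => -[|n] //= _; rewrite comp_sum0.
have [t0 c_t0] := constant_on_stable_head mf cf.
pose H t := comp_sum k (fun a => c (t :: a)).
have evH t : ev_poly k (H t).
  apply: (IHk _ (fun a => f (t :: a))); first exact: monotone_size_cons.
  exact: constant_on_stable_cons.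
have H_t0 t : (t0 <= t)%N -> H t = H t0.
  move=> le_t0t; apply: funext => n; apply: eq_big_seq => a.
  by rewrite mem_compositions => /andP[/eqP sz_a _]; exact: c_t0.
have -> : comp_sum k.+1 c =
    (fun n => \sum_(t < t0) delay t (H t) n + delay t0 (psum (H t0)) n).
  by apply: funext => n; rewrite comp_sumS (antidiag_sum_eventually_const _ H_t0).
apply: ev_polyD; last exact/ev_poly_delay/ev_poly_psum.
by apply: ev_poly_sum => t; apply/ev_poly_delay/ev_polyS.
Qed.

End CompositionSums.

Definition incl T (A B : T -> Prop) := forall x, A x -> B x.

Lemma incl_refl T (A : T -> Prop) : incl A A.
Proof. by []. Qed.

Lemma incl_trans T (A B C : T -> Prop) : incl A B -> incl B C -> incl A C.
Proof. by move=> AB BC x /AB /BC. Qed.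

Section Submodules.
Variables (R : comNzRingType) (M : lmodType R).
Implicit Types (A B G H : M -> Prop).

Definition msum A B x := exists a b, [/\ A a, B b & x = a + b].

Definition rline (y : M) x := exists r : R, x = r *: y.

Lemma submodule0 : submodule (fun x : M => x = 0).
Proof. by split=> [|x y -> ->|r x ->]; rewrite ?addr0 ?scaler0. Qed.

Lemma submoduleI A B : submodule A -> submodule B -> submodule (fun x => A x /\ B x).
Proof.
move=> [A0 AD AZ] [B0 BD BZ]; split=> [//|x y [? ?] [? ?]|r x [? ?]]; split; auto.
Qed.

Lemma submodule_msum A B : submodule A -> submodule B -> submodule (msum A B).
Proof.
move=> [A0 AD AZ] [B0 BD BZ]; split.
- by exists 0, 0; rewrite addr0.
- move=> _ _ [a [b [Aa Bb ->]]] [a' [b' [Aa' Bb' ->]]].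
  by exists (a + a'), (b + b'); rewrite addrACA; split; auto.
- by move=> r _ [a [b [Aa Bb ->]]]; exists (r *: a), (r *: b); rewrite scalerDr; split; auto.
Qed.

Lemma msuml A B : submodule B -> incl A (msum A B).
Proof. by case=> B0 _ _ a Aa; exists a, 0; rewrite addr0. Qed.

Lemma msumr A B : submodule A -> incl B (msum A B).
Proof. by case=> A0 _ _ b Bb; exists 0, b; rewrite add0r. Qed.

Lemma msum_sub A B C : submodule C -> incl A C -> incl B C -> incl (msum A B) C.
Proof. by move=> [_ CD _] AC BC _ [a [b [/AC Ca /BC Cb ->]]]; apply: CD. Qed.

Lemma submodule_rline y : submodule (rline y).
Proof.
split=> [|_ _ [a ->] [b ->]|r _ [a ->]]; first by exists 0; rewrite scale0r.
  by exists (a + b); rewrite scalerDl.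
by exists (r * a); rewrite scalerA.
Qed.

Lemma submoduleN A x : submodule A -> A x -> A (- x).
Proof. by case=> _ _ AZ Ax; rewrite -scaleN1r; apply: AZ. Qed.

Lemma submodule_sum A I (r : seq I) (P : pred I) (F : I -> M) :
  submodule A -> (forall i, P i -> A (F i)) -> A (\sum_(i <- r | P i) F i).
Proof. by case=> A0 AD _ AF; apply: big_ind. Qed.

Lemma submoduleX A B : submodule A -> submodule B ->
  submodule (fun x : M * M => A x.1 /\ B x.2).
Proof.
move=> [A0 AD AZ] [B0 BD BZ]; split=> // [[x1 x2] [y1 y2]|r [x1 x2]] /=.
  by move=> [? ?] [? ?]; split; auto.
by move=> [? ?]; split; auto.
Qed.

Lemma submodule_ker (M' : lmodType R) (f : {linear M -> M'}) A :
  submodule A -> submodule (fun x => A x /\ f x = 0).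
Proof.
move=> [A0 AD AZ]; split=> [|x y [? fx0] [? fy0]|r x [? fx0]]; first by rewrite linear0.
  by rewrite linearD fx0 fy0 addr0; split; auto.
by rewrite linearZZ fx0 scaler0; split; auto.
Qed.

Lemma submodule_img (M' : lmodType R) (f : {linear M -> M'}) A :
  submodule A -> submodule (fun y => exists2 x, A x & y = f x).
Proof.
move=> [A0 AD AZ]; split=> [|_ _ [x Ax ->] [y Ay ->]|r _ [x Ax ->]].
- by exists 0; rewrite ?linear0.
- by exists (x + y); rewrite ?linearD; auto.
- by exists (r *: x); rewrite ?linearZZ; auto.
Qed.

Lemma rspanP G x : rspan G x <->
  exists s : seq (R * M), (forall p, p \in s -> G p.2) /\ x = \sum_(p <- s) p.1 *: p.2.
Proof.
split=> [[n [c [g [Gg ->]]]]|[s [Gs ->]]].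
  exists [seq (c i, g i) | i <- enum 'I_n]; split; last by rewrite big_map big_enum.
  by move=> p /mapP[i _ ->]; apply: Gg.
exists (size s), (fun i => (nth (0, 0) s i).1), (fun i => (nth (0, 0) s i).2).
by split=> [i|]; [apply/Gs/mem_nth | rewrite (big_nth (0, 0)) big_mkord].
Qed.

Lemma submodule_rspan G : submodule (rspan G).
Proof.
split.
- by apply/rspanP; exists [::]; rewrite big_nil.
- move=> x y /rspanP[s1 [G1 ->]] /rspanP[s2 [G2 ->]]; apply/rspanP.
  by exists (s1 ++ s2); rewrite big_cat; split=> // p; rewrite mem_cat => /orP[]; auto.
- move=> r x /rspanP[s [Gs ->]]; apply/rspanP.
  exists [seq (r * p.1, p.2) | p <- s]; split; first by move=> _ /mapP[q /Gs Gq ->].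
  by rewrite big_map scaler_sumr; apply: eq_bigr => p _; rewrite scalerA.
Qed.

Lemma rspan_gen G y : G y -> rspan G y.
Proof.
move=> Gy; apply/rspanP; exists [:: (1, y)]; rewrite big_seq1 scale1r.
by split=> // p; rewrite inE => /eqP->.
Qed.

Lemma rspan_pred0 G : (forall y, ~ G y) -> forall x, rspan G x <-> x = 0.
Proof.
move=> G0 x; split=> [/rspanP[[|p s] [Gs ->]]|->]; first by rewrite big_nil.
  by case: (G0 _ (Gs p (mem_head _ _))).
by case: (submodule_rspan G).
Qed.

Lemma rspan_sub G B : submodule B -> incl G B -> incl (rspan G) B.
Proof.
move=> sB GB x /rspanP[s [Gs ->]].
by rewrite big_seq; apply: submodule_sum => // p /Gs/GB; case: sB => _ _; apply.
Qed.

Lemma rspanS G H : incl G H -> incl (rspan G) (rspan H).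
Proof.
move=> GH; apply: rspan_sub; first exact: submodule_rspan.
by move=> y /GH; apply: rspan_gen.
Qed.

Lemma eq_rspan G H : (forall y, G y <-> H y) -> forall x, rspan G x <-> rspan H x.
Proof. by move=> GH x; split; apply: rspanS => y /GH. Qed.

Lemma rspanU1 G y x : rspan (fun z => G z \/ z = y) x <-> msum (rspan G) (rline y) x.
Proof.
have [span0 spanD spanZ] := submodule_rspan (fun z => G z \/ z = y).
split=> [|[a [_ [Ga [r ->] ->]]]]; last first.
  by apply: spanD; [apply: rspanS Ga => z; left | apply/spanZ/rspan_gen; right].
apply: rspan_sub => [|z [Gz|->]]; first exact/submodule_msum/submodule_rline/submodule_rspan.
  exact/(msuml (submodule_rline y))/rspan_gen.
by apply: (msumr (submodule_rspan G)); exists 1; rewrite scale1r.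
Qed.

Lemma generator_mem A m (g : 'I_m -> M) :
  (forall x, A x <-> exists c : 'I_m -> R, x = \sum_(i < m) c i *: g i) -> forall j, A (g j).
Proof.
move=> A_g j; apply/A_g; exists (fun i => (i == j)%:R).
by rewrite (bigD1 j) //= eqxx scale1r big1 ?addr0 // => i /negbTE->; rewrite scale0r.
Qed.

Definition inl0 (x : M) : M * M := (x, 0).
Definition pair_opp (x : M) : M * M := (x, - x).
Definition pair_add (x : M * M) : M := x.1 + x.2.

Lemma inl0_is_linear : linear inl0.
Proof. by move=> a u v; apply: injective_projections; rewrite //= scaler0 addr0. Qed.
HB.instance Definition _ := GRing.isLinear.Build _ _ _ _ inl0 inl0_is_linear.

Lemma snd_is_linear : linear (@snd M M).
Proof. by []. Qed.
HB.instance Definition _ := GRing.isLinear.Build _ _ _ _ (@snd M M) snd_is_linear.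

Lemma pair_opp_is_linear : linear pair_opp.
Proof. by move=> a u v; apply: injective_projections; rewrite //= opprD scalerN. Qed.
HB.instance Definition _ := GRing.isLinear.Build _ _ _ _ pair_opp pair_opp_is_linear.

Lemma pair_add_is_linear : linear pair_add.
Proof. by move=> a [u1 u2] [v1 v2]; rewrite /pair_add /= scalerDr addrACA. Qed.
HB.instance Definition _ := GRing.isLinear.Build _ _ _ _ pair_add pair_add_is_linear.

End Submodules.

Lemma rspan_map (R : comNzRingType) (M M' : lmodType R) (f : {linear M -> M'}) G x :
  rspan G x -> rspan (fun y => exists2 z, G z & y = f z) (f x).
Proof.
move=> /rspanP[s [Gs ->]]; apply/rspanP; exists [seq (p.1, f p.2) | p <- s]; split.
  by move=> _ /mapP[q /Gs Gq ->]; exists q.2.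
by rewrite linear_sum big_map; apply: eq_bigr => p _; rewrite linearZZ.
Qed.

Section LengthFunctions.
Variables (RR : realType) (R : comNzRingType)
  (lam : forall M : lmodType R, (M -> Prop) -> \bar RR).
Hypothesis lamL : is_length_function lam.
Variable M : lmodType R.
Implicit Types A B : M -> Prop.

Lemma length_ge0 A : submodule A -> (0 <= lam A)%E.
Proof. by case: lamL => ge0 _ _ _ _; apply: ge0. Qed.

Lemma eq_length A B : submodule A -> submodule B ->
  (forall x, A x <-> B x) -> lam A = lam B.
Proof.
case: lamL => _ _ iso _ _ sA sB AB; symmetry; apply: (iso M M idfun) => // y.
by split=> [/AB By|[x Ax ->]]; [exists y | apply/AB].
Qed.

Lemma length_eq0 A : submodule A -> (forall x, A x <-> x = 0) -> lam A = 0%E.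
Proof.
case: lamL => _ len0 _ _ _ sA A0; rewrite -(len0 M).
by apply: eq_length => //; exact: submodule0.
Qed.

Lemma le_length A B : submodule A -> submodule B -> incl A B -> (lam A <= lam B)%E.
Proof.
case: lamL => _ _ _ _ sup sA sB AB; apply: (sup M A sA).2 => C sC fgC CA.
by apply: (sup M B sB).1 => // x /CA /AB.
Qed.

Lemma length_ker_img (M' : lmodType R) (f : {linear M -> M'}) A : submodule A ->
  lam A = (lam (fun x => A x /\ f x = 0%R) + lam (fun y => exists2 x, A x & y = f x))%E.
Proof.
case: lamL => _ _ _ add _ sA; apply: (add M M M' idfun f) => //.
- exact: submodule_ker.
- exact: submodule_img.
- by move=> x [].
- by move=> y; split=> [[Ay fy0]|[x [Ax fx0] ->]]; [exists y|].
Qed.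

Lemma length_prod A B : submodule A -> submodule B ->
  lam (fun x : M * M => A x.1 /\ B x.2) = (lam A + lam B)%E.
Proof.
case: lamL => _ _ _ add _ sA sB; have [A0 _ _] := sA; have [B0 _ _] := sB.
apply: (add M (M * M)%type M (@inl0 _ M) (@snd M M)) => //.
- exact: submoduleX.
- by move=> x y _ _ [].
- by move=> y; split=> [By|[[x1 x2] [_ ?] ->]] //; exists (0, y).
- by move=> [y1 y2]; split=> [[[/= Ay1 _] /= ->]|[x Ax [-> ->]]]; [exists y1|].
Qed.

(* The exact sequence 0 -> A :&: B -> A x B -> A + B -> 0, via x |-> (x, -x) and
   (a, b) |-> a + b. *)
Lemma length_modular A B : submodule A -> submodule B ->
  (lam A + lam B)%E = (lam (msum A B) + lam (fun x => A x /\ B x))%E.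
Proof.
move=> sA sB; rewrite -length_prod // addeC.
case: lamL => _ _ _ add _; have [_ _ BZ] := sB.
apply: (add M (M * M)%type M (@pair_opp _ M) (@pair_add _ M)).
- exact: submoduleI.
- exact: submoduleX.
- exact: submodule_msum.
- by move=> x [Ax Bx]; split=> //=; apply: submoduleN.
- by move=> x y _ _ [].
- by move=> y; split=> [[a [b [Aa Bb ->]]]|[[a b] /= [Aa Bb] ->]]; [exists (a, b) | exists a, b].
- move=> [a b]; split=> [[/= [Aa Bb] /eqP]|[x [Ax Bx] [-> ->]]]; last first.
    by split; [split=> //=; apply: submoduleN | exact: subrr].
  rewrite /pair_add /= addr_eq0 => /eqP ab; exists a; last by rewrite /pair_opp ab opprK.
  by split=> //; rewrite ab; apply: submoduleN.
Qed.

Lemma length_img_le (M' : lmodType R) (f : {linear M -> M'}) A : submodule A ->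
  (lam (fun y => exists2 x, A x & y = f x) <= lam A)%E.
Proof.
move=> sA; rewrite [leRHS](length_ker_img f sA) leeDr //.
exact/length_ge0/submodule_ker.
Qed.

Lemma length_msum_le A B : submodule A -> submodule B ->
  (lam (msum A B) <= lam A + lam B)%E.
Proof.
move=> sA sB; rewrite length_modular // leeDl //.
exact/length_ge0/submoduleI.
Qed.

Lemma fin_length_le A B : submodule A -> submodule B -> incl A B ->
  lam B \is a fin_num -> lam A \is a fin_num.
Proof.
move=> sA sB AB; rewrite !ge0_fin_numE ?length_ge0 //.
exact/le_lt_trans/le_length.
Qed.

(* If f is injective on A modulo B, it preserves the length of "A / B". *)
Lemma length_sub_img (M' : lmodType R) (f : {linear M -> M'}) A B :
  submodule A -> submodule B -> incl B A -> (forall x, A x -> f x = 0 -> B x) ->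
  lam A \is a fin_num ->
  (fine (lam A) - fine (lam B) =
   fine (lam (fun y => exists2 x, A x & y = f x)) -
   fine (lam (fun y => exists2 x, B x & y = f x)))%R.
Proof.
move=> sA sB BA kerB finA.
have finB := fin_length_le sB sA BA finA.
have eq_ker : lam (fun x => B x /\ f x = 0) = lam (fun x => A x /\ f x = 0).
  apply: eq_length; try exact: submodule_ker.
  by move=> x; split=> [[/BA] | [Ax fx0]]; auto.
move: finA finB; rewrite (length_ker_img f sA) (length_ker_img f sB) eq_ker.
rewrite !fin_numD => /andP[finK finfA] /andP[_ finfB].
by rewrite !fineD //; ring.
Qed.

End LengthFunctions.

Lemma noetherian_acc (R : comNzRingType) :
  noetherian R -> acc_cond (@incl R) (fun I => submodule (M := R^o) I).
Proof.
move=> noethR I sI ascI.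
have I_le a b : (a <= b)%N -> incl (I a) (I b).
  by move=> le_ab; exact: (ascending_le (@incl_refl R) (@incl_trans R) ascI le_ab).
pose U (x : R^o) := exists n, I n x.
have sU : submodule U.
  split=> [|x y [a Iax] [b Iby]|r x [a Iax]]; first by exists 0%N; case: (sI 0%N).
    exists (maxn a b); case: (sI (maxn a b)) => _ ID _.
    by apply: ID; [apply: I_le Iax; rewrite leq_maxl | apply: I_le Iby; rewrite leq_maxr].
  by exists a; case: (sI a) => _ _; apply.
have [m [gen U_gen]] := noethR U sU.
have genU := generator_mem U_gen.
pose N := \max_(i < m) sval (cid (genU i)).
exists N => n le_Nn x Inx; have /U_gen[c ->] : U x by exists n.
apply: submodule_sum => // i _; case: (sI N) => _ _; apply.
exact: I_le _ _ (leq_bigmax i) _ (svalP (cid (genU i))).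
Qed.

Section MonomialAction.
Variables (R : comNzRingType) (k : nat) (N : lmodType {mpoly R[k]}) (b : 'X_{1..k}).

Definition mulXm (x : restr N) : restr N := ('X_[b] *: (x : N) : N).

Lemma mulXm_is_linear : linear mulXm.
Proof.
move=> a u v; rewrite /mulXm.
change (('X_[b] : {mpoly R[k]}) *: (mpolyC k a *: (u : N) + (v : N)) =
  mpolyC k a *: ('X_[b] *: (u : N)) + 'X_[b] *: (v : N)).
by rewrite scalerDr !scalerA (mulrC 'X_[b]).
Qed.
HB.instance Definition _ := GRing.isLinear.Build _ _ _ _ mulXm mulXm_is_linear.

Lemma mulXmZ r x : mulXm (r *: x) = r *: mulXm x.
Proof. exact: linearZZ. Qed.

End MonomialAction.

Lemma mulXmM (R : comNzRingType) k (N : lmodType {mpoly R[k]}) (b c : 'X_{1..k}) x :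
  mulXm b (mulXm c x : restr N) = mulXm (c + b)%MM x.
Proof. by rewrite /mulXm scalerA -mpolyXD addmC. Qed.

Definition mnm_of_seq k (a : seq nat) : 'X_{1..k} := [multinom nth 0%N a i | i < k].

Lemma mnm_of_seqE k a (i : 'I_k) : mnm_of_seq k a i = nth 0%N a i.
Proof. by rewrite mnmE. Qed.

Lemma mnm_of_seqK k (b : 'X_{1..k}) : mnm_of_seq k (val (val b)) = b.
Proof. by apply/mnmP => i; rewrite mnm_of_seqE -mnm_nth. Qed.

Lemma mdeg_mnm_of_seq k a : size a = k -> mdeg (mnm_of_seq k a) = sumn a.
Proof.
move=> <-; rewrite mdegE (eq_bigr (fun i : 'I_(size a) => nth 0%N a i)).
  by rewrite -(big_mkord xpredT (nth 0%N a)) -(big_nth 0%N xpredT id) sumnE.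
by move=> i _; rewrite mnm_of_seqE.
Qed.

Lemma mnm_of_seq_inj k a a' : size a = k -> size a' = k ->
  mnm_of_seq k a = mnm_of_seq k a' -> a = a'.
Proof.
move=> sz_a sz_a' eq_aa'; apply: (@eq_from_nth _ 0%N); first by rewrite sz_a sz_a'.
move=> i; rewrite sz_a => lt_ik.
by have := congr1 (fun b : 'X_{1..k} => b (Ordinal lt_ik)) eq_aa'; rewrite /= !mnm_of_seqE.
Qed.

Lemma mnm_of_seq_incr k a i (lt_ik : (i < k)%N) :
  mnm_of_seq k (incr_nth a i) = (mnm_of_seq k a + U_(Ordinal lt_ik))%MM.
Proof.
apply/mnmP => j; rewrite mnmDE mnm1E !mnm_of_seqE nth_incr_nth addnC.
by congr (_ + _)%N.
Qed.

Definition monomials_deg_le k n : seq 'X_{1..k} :=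
  [seq mnm_of_seq k a | a <- flatten [seq compositions k d | d <- iota 0 n.+1]].

Lemma mem_monomials_deg_le k n b : (b \in monomials_deg_le k n) = (mdeg b <= n)%N.
Proof.
apply/mapP/idP => [[a /flattenP[_ /mapP[d d_in ->]]] | le_bn].
  move: d_in; rewrite mem_iota add0n ltnS mem_compositions.
  by move=> le_dn /andP[/eqP sz_a /eqP sum_a] ->; rewrite mdeg_mnm_of_seq ?sum_a.
exists (val (val b)); rewrite ?mnm_of_seqK //; apply/flattenP.
exists (compositions k (mdeg b)); first by apply/mapP; exists (mdeg b); rewrite // mem_iota.
by rewrite mem_compositions size_tuple eqxx -{2}(mnm_of_seqK b) mdeg_mnm_of_seq ?size_tuple ?eqxx.
Qed.

Lemma uniq_monomials_deg_le k n : uniq (monomials_deg_le k n).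
Proof.
rewrite map_inj_in_uniq.
  elim: (iota 0 n.+1) (iota_uniq 0 n.+1) => [//|d s IHs] /= /andP[d_s uniq_s].
  rewrite cat_uniq uniq_compositions IHs // andbT.
  apply/hasPn => a /flattenP[_ /mapP[d' d's ->]].
  rewrite !mem_compositions => /andP[_ /eqP sum_a]; apply/negP => /andP[_ /eqP sum_a'].
  by move: d_s; rewrite -sum_a' sum_a d's.
move=> a a' /flattenP[_ /mapP[d _ ->] a_in] /flattenP[_ /mapP[d' _ ->] a'_in].
move: a_in a'_in; rewrite !mem_compositions => /andP[/eqP sz_a _] /andP[/eqP sz_a' _].
exact: mnm_of_seq_inj.
Qed.

Lemma seq_max d (T : orderType d) (s : seq T) : s != [::] ->
  exists2 t, t \in s & forall u, u \in s -> (u <= t)%O.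
Proof.
elim: s => [//|a [|b s] IHs] _; first by exists a => [|u]; rewrite ?inE // => /eqP->.
have [t t_in t_max] := IHs isT; exists (Order.max a t).
  by case: (leP a t) => _; rewrite inE ?t_in ?eqxx ?orbT.
by move=> u; rewrite inE => /orP[/eqP->|/t_max le_ut]; rewrite le_max ?lexx ?le_ut ?orbT.
Qed.

Section HilbertFunction.
Variables (RR : realType) (R : comNzRingType) (k : nat)
  (lam : forall M : lmodType R, (M -> Prop) -> \bar RR)
  (N : lmodType {mpoly R[k]}) (V0 : restr N -> Prop) (m : nat) (g : 'I_m -> restr N).
Hypotheses (lamL : is_length_function lam) (sV0 : submodule V0) (finV0 : (lam V0 < +oo)%E)
  (V0_g : forall x, V0 x <-> exists c : 'I_m -> R, x = \sum_(i < m) c i *: g i).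
Local Notation V := (restr N).

(* Pairs (monomial, generator index), ordered lexicographically; the monomial order
   refines the total degree. *)
Local Notation idx := ('X_{1..k} * 'I_m)%type.

Definition monogen (t : idx) : V := mulXm t.1 (g t.2).

Definition span_idx (P : idx -> Prop) := rspan (fun y => exists2 t, P t & y = monogen t).

Definition below t := span_idx (fun u => (u < t)%O).

Definition line t := rline (monogen t).

Definition colon t (r : R) := below t (r *: monogen t).

(* The length of (below t + R monogen t) / below t. *)
Definition jump t := fine (lam (line t)) - fine (lam (fun x => below t x /\ line t x)).

Lemma le_idx_mdeg (u t : idx) : (u <= t)%O -> (mdeg u.1 <= mdeg t.1)%N.
Proof. by rewrite leEprodlexi => /andP[/lemc_mdeg]. Qed.

Lemma submodule_span_idx P : submodule (span_idx P).
Proof. exact: submodule_rspan. Qed.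

Lemma eq_span_idx P Q : (forall u, P u <-> Q u) -> forall x, span_idx P x <-> span_idx Q x.
Proof. by move=> PQ; apply: eq_rspan => y; split=> -[u /PQ Pu ->]; exists u. Qed.

Lemma span_idxU1 P t x : span_idx (fun u => P u \/ u = t) x <-> msum (span_idx P) (line t) x.
Proof.
rewrite -rspanU1; apply: eq_rspan => y; split=> [[u [Pu|->] ->]|[[u Pu ->]|->]].
- by left; exists u.
- by right.
- by exists u; first left.
- by exists t; first right.
Qed.

Lemma length_line_le t : (lam (line t) <= lam V0)%E.
Proof.
have sg := submodule_rline (g t.2).
have line_img x : line t x <-> exists2 y, rline (g t.2) y & x = mulXm t.1 y.
  split=> [[r ->]|[_ [r ->] ->]]; last by exists r; rewrite mulXmZ.
  by exists (r *: g t.2); [exists r | rewrite mulXmZ].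
rewrite (eq_length lamL (submodule_rline _) (submodule_img _ sg) line_img).
apply: le_trans (length_img_le lamL _ sg) (le_length lamL sg sV0 _) => _ [r ->].
by case: sV0 => _ _; apply; exact: generator_mem V0_g _.
Qed.

Lemma fin_length_span_seq (s : seq idx) : lam (span_idx (fun u => u \in s)) \is a fin_num.
Proof.
rewrite ge0_fin_numE; last exact/length_ge0/submodule_rspan.
elim: s => [|t s IHs].
  rewrite (length_eq0 lamL (submodule_rspan _)) ?ltry // => x.
  by apply: rspan_pred0 => y [].
have sS := submodule_rspan (fun y => exists2 u, u \in s & y = monogen u).
have sL := submodule_rline (monogen t).
have span_cons x :
    span_idx (fun u => u \in t :: s) x <-> msum (span_idx (fun u => u \in s)) (line t) x.
  rewrite -span_idxU1; apply: eq_span_idx => u.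
  by rewrite inE; split=> [/orP[/eqP|]|[|/eqP]]; auto=> ->; rewrite ?orbT.
rewrite (eq_length lamL (submodule_rspan _) (submodule_msum sS sL) span_cons).
apply: le_lt_trans (length_msum_le lamL sS sL) _.
exact: lte_add_pinfty IHs (le_lt_trans (length_line_le t) finV0).
Qed.

Definition idx_deg_le n : seq idx := [seq (b, j) | b <- monomials_deg_le k n, j <- enum 'I_m].

Lemma mem_idx_deg_le n u : (u \in idx_deg_le n) = (mdeg u.1 <= n)%N.
Proof.
apply/allpairsP/idP => [[[b j] [/= b_n _ ->]]|u_n]; first by rewrite -mem_monomials_deg_le.
by exists u; case: u u_n => b j /= u_n; rewrite mem_monomials_deg_le mem_enum.
Qed.

Lemma uniq_idx_deg_le n : uniq (idx_deg_le n).
Proof.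
apply: allpairs_uniq; [exact: uniq_monomials_deg_le | exact: enum_uniq |].
by move=> [b i] [b' j] _ _ /= [-> ->].
Qed.

Lemma fin_length_deg n A : submodule A ->
  incl A (span_idx (fun u => (mdeg u.1 <= n)%N)) -> lam A \is a fin_num.
Proof.
move=> sA A_n.
apply: (fin_length_le lamL sA (submodule_span_idx _) _ (fin_length_span_seq (idx_deg_le n))).
by apply: incl_trans A_n _; apply: rspanS => _ [u u_n ->]; exists u; rewrite ?mem_idx_deg_le.
Qed.

Lemma below_deg t : incl (below t) (span_idx (fun u => (mdeg u.1 <= mdeg t.1)%N)).
Proof. by apply: rspanS => _ [u /ltW/le_idx_mdeg u_t ->]; exists u. Qed.

Lemma line_deg t : incl (line t) (span_idx (fun u => (mdeg u.1 <= mdeg t.1)%N)).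
Proof.
move=> _ [r ->]; have [_ _ spanZ] := submodule_span_idx (fun u => (mdeg u.1 <= mdeg t.1)%N).
by apply/spanZ/rspan_gen; exists t.
Qed.

Lemma length_msum_below_line t :
  fine (lam (msum (below t) (line t))) = fine (lam (below t)) + jump t.
Proof.
have sB := submodule_span_idx (fun u => (u < t)%O).
have sL := submodule_rline (monogen t).
have sS := submodule_msum sB sL; have sBL := submoduleI sB sL.
have S_deg := msum_sub (submodule_span_idx _) (@below_deg t) (@line_deg t).
have fin A : submodule A -> incl A (msum (below t) (line t)) -> lam A \is a fin_num.
  by move=> sA A_t; apply: fin_length_deg sA (incl_trans A_t S_deg).
have fB := fin _ sB (msuml sL).
have fL := fin _ sL (msumr sB).
have fS := fin _ sS (@incl_refl _ _).
have fBL := fin _ sBL (fun x BLx => msuml sL BLx.1).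
have modular := length_modular lamL sB sL.
rewrite -(fineK fB) -(fineK fL) -(fineK fS) -(fineK fBL) -!EFinD in modular.
by have := EFin_inj modular; rewrite /jump; lra.
Qed.

Lemma length_span_seq (s : seq idx) : uniq s ->
  (forall t u, t \in s -> (u < t)%O -> u \in s) ->
  fine (lam (span_idx (fun u => u \in s))) = \sum_(t <- s) jump t.
Proof.
have [n] := ubnP (size s); elim: n s => // n IHn s /ltnSE sz_s uniq_s down_s.
case: (eqVneq s [::]) => [->|s_ne0].
  by rewrite big_nil (length_eq0 lamL (submodule_span_idx _)) //; apply: rspan_pred0 => y [].
have [t t_s t_max] := seq_max s_ne0.
have mem_rem u : (u \in rem t s) = (u < t)%O.
  rewrite mem_rem_uniq // inE lt_neqAle; case: (eqVneq u t) => //= ne_ut.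
  by apply/idP/idP => [/t_max //|le_ut]; apply: down_s t_s _; rewrite lt_neqAle ne_ut.
have span_rem x : span_idx (fun u => u \in rem t s) x <-> below t x.
  by apply: eq_span_idx => u; rewrite mem_rem.
have span_s x : span_idx (fun u => u \in s) x <-> msum (below t) (line t) x.
  rewrite -span_idxU1; apply: eq_span_idx => u.
  split=> [u_s|[lt_ut|->//]]; last exact: down_s t_s lt_ut.
  by case: (eqVneq u t) => [->|ne_ut]; [right | left; rewrite lt_neqAle ne_ut t_max].
rewrite (big_rem t) //= addrC -(IHn (rem t s)) ?rem_uniq //; first last.
- by move=> a b; rewrite !mem_rem => /[swap] /lt_trans; apply.
- by apply: leq_trans sz_s; rewrite size_rem // ltn_predL lt0n size_eq0.
have sS := submodule_msum (submodule_span_idx (fun u => (u < t)%O))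
  (submodule_rline (monogen t)).
rewrite (eq_length lamL (submodule_span_idx _) sS span_s) length_msum_below_line.
by rewrite (eq_length lamL (submodule_span_idx _) (submodule_span_idx _) span_rem).
Qed.

Definition shift (l : 'I_k) (t : idx) : idx := ((t.1 + U_(l))%MM, t.2).

Lemma monogen_shift l t : mulXm U_(l) (monogen t) = monogen (shift l t).
Proof. exact: mulXmM. Qed.

Lemma lt_idx_shift l u t : (shift l u < shift l t)%O = (u < t)%O.
Proof. by rewrite !ltEprodlexi /= !lemc_add2l. Qed.

Lemma below_shift l t x : below t x -> below (shift l t) (mulXm U_(l) x).
Proof.
move=> /(rspan_map (mulXm U_(l))); apply: rspanS => _ [_ [u lt_ut ->] ->].
by exists (shift l u); [rewrite lt_idx_shift | exact: monogen_shift].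
Qed.

Lemma submodule_colon t : submodule (M := R^o) (colon t).
Proof.
have [B0 BD BZ] := submodule_span_idx (fun u => (u < t)%O).
split=> [|r r' Br Br'|a r Br]; rewrite /colon.
- by rewrite scale0r.
- by rewrite scalerDl; apply: BD.
- by rewrite -scalerA; apply: BZ.
Qed.

Lemma colon_shift l t : incl (colon t) (colon (shift l t)).
Proof. by move=> r /(below_shift l); rewrite mulXmZ monogen_shift. Qed.

Lemma jump_shift l t : incl (colon (shift l t)) (colon t) -> jump t = jump (shift l t).
Proof.
move=> colon_le.
have sL := submodule_rline (monogen t).
have sBL := submoduleI (submodule_span_idx (fun u => (u < t)%O)) sL.
have img_line y : (exists2 x, line t x & y = mulXm U_(l) x) <-> line (shift l t) y.
  split=> [[_ [r ->] ->]|[r ->]]; first by exists r; rewrite mulXmZ monogen_shift.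
  by exists (r *: monogen t); [exists r | rewrite mulXmZ monogen_shift].
have img_BL y : (exists2 x, below t x /\ line t x & y = mulXm U_(l) x) <->
    below (shift l t) y /\ line (shift l t) y.
  split=> [[x [Bx [r xE]] ->]|[By [r yE]]].
    by split; [exact: below_shift | exists r; rewrite xE mulXmZ monogen_shift].
  exists (r *: monogen t); last by rewrite yE mulXmZ monogen_shift.
  by rewrite yE in By; split; [exact: (colon_le r By) | exists r].
have sBL' := submoduleI (submodule_span_idx (fun u => (u < shift l t)%O))
  (submodule_rline (monogen (shift l t))).
rewrite /jump -(eq_length lamL (submodule_img (mulXm U_(l)) sL) (submodule_rline _) img_line).
rewrite -(eq_length lamL (submodule_img (mulXm U_(l)) sBL) sBL' img_BL).
apply: length_sub_img => //; first by move=> x [].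
  move=> _ [r ->] Xr0; split; last by exists r.
  apply: colon_le; rewrite /colon -monogen_shift -mulXmZ Xr0.
  by case: (submodule_span_idx (fun u => (u < shift l t)%O)).
exact: fin_length_deg sL (@line_deg t).
Qed.

Lemma deg_le_mpolyX (b : 'X_{1..k}) n : (mdeg b <= n)%N -> deg_le ('X_[b] : {mpoly R[k]}) n.
Proof.
move=> b_n mu; rewrite mcoeffX; case: (eqVneq b mu) => [<- //|_].
by rewrite eqxx.
Qed.

Lemma scale_mpoly_combination (p : {mpoly R[k]}) (c : 'I_m -> R) :
  (p *: ((\sum_(i < m) c i *: g i : V) : N) : V) =
  \sum_(mu <- msupp p) \sum_(i < m) (p@_mu * c i) *: monogen (mu, i).
Proof.
rewrite {1}(mpolyE p) scaler_suml; apply: eq_bigr => mu _.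
rewrite scaler_sumr; apply: eq_bigr => i _; rewrite /monogen /mulXm.
change ((p@_mu *: ('X_[mu] : {mpoly R[k]})) *: (mpolyC k (c i) *: (g i : N)) =
  mpolyC k (p@_mu * c i) *: (('X_[mu] : {mpoly R[k]}) *: (g i : N))).
by rewrite !scalerA -mul_mpolyC mpolyCM; congr (_ *: _); ring.
Qed.

Lemma SnV_span_deg n x : SnV n V0 x <-> span_idx (fun u => (mdeg u.1 <= n)%N) x.
Proof.
split; last first.
  apply: rspanS => _ [u u_n ->]; exists 'X_[u.1], (g u.2).
  by split; [exact: deg_le_mpolyX | exact: generator_mem V0_g _ |].
move=> SnVx; apply: (rspan_sub _ _ SnVx) => [|_ [p [v [p_n /V0_g[c ->] ->]]]].
  exact: submodule_span_idx.
rewrite scale_mpoly_combination big_seq.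
apply: submodule_sum (submodule_span_idx _) _ => mu mu_p.
apply: submodule_sum (submodule_span_idx _) _ => i _.
case: (submodule_span_idx (fun u => (mdeg u.1 <= n)%N)) => _ _; apply; apply: rspan_gen.
by exists (mu, i) => //=; apply: p_n; rewrite -mcoeff_msupp.
Qed.

Lemma length_SnV_fin n : lam (SnV n V0) \is a fin_num.
Proof. exact: fin_length_deg (submodule_rspan _) (fun x => (SnV_span_deg n x).1). Qed.

Lemma length_SnV n : fine (lam (SnV n V0)) =
  \sum_(j <- enum 'I_m) psum (comp_sum k (fun a => jump (mnm_of_seq k a, j))) n.
Proof.
have span_seq x : SnV n V0 x <-> span_idx (fun u => u \in idx_deg_le n) x.
  by apply: iff_trans (SnV_span_deg n x) _; apply: eq_span_idx => u; rewrite mem_idx_deg_le.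
rewrite (eq_length lamL (submodule_rspan _) (submodule_span_idx _) span_seq).
rewrite length_span_seq ?uniq_idx_deg_le //; last first.
  by move=> t u; rewrite !mem_idx_deg_le => t_n /ltW/le_idx_mdeg/leq_trans; apply.
rewrite /idx_deg_le big_allpairs /monomials_deg_le big_map big_flatten big_map.
rewrite (eq_bigr (fun d => \sum_(j <- enum 'I_m) \sum_(a <- compositions k d)
  jump (mnm_of_seq k a, j))) => [|d _]; last exact: exchange_big.
rewrite exchange_big; apply: eq_bigr => j _.
by rewrite /psum -(big_mkord xpredT (comp_sum k _)) /index_iota subn0.
Qed.

Lemma ev_poly_length_SnV : noetherian R -> ev_poly k.+1 (fun n => fine (lam (SnV n V0))).
Proof.
move=> noethR; rewrite (funext length_SnV).
apply: ev_poly_sum => j; apply: ev_poly_psum.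
apply: (ev_poly_comp_sum (@incl_refl R) (@incl_trans R) (noetherian_acc noethR)
  (f := fun a => colon (mnm_of_seq k a, j))).
- split=> [a _|a _ i lt_ik]; first exact: submodule_colon.
  by rewrite (mnm_of_seq_incr _ lt_ik); exact: colon_shift.
- move=> a _ i lt_ik; rewrite (mnm_of_seq_incr _ lt_ik).
  exact: (@jump_shift (Ordinal lt_ik) (mnm_of_seq k a, j)).
Qed.

End HilbertFunction.

Lemma series_mul_bdiff (V : nzRingType) (a b : nat -> V) :
  series_mul a (bdiff b) = bdiff (series_mul a b).
Proof.
apply: funext => -[|n]; rewrite /bdiff /series_mul.
  by rewrite !big_ord1 /= !subr0.
rewrite big_ord_recr /= subnn subr0 [X in _ = X - _]big_ord_recr /= subnn addrAC.
congr (_ + _); rewrite -sumrB; apply: eq_bigr => i _.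
by rewrite subSn ?mulrBr // -ltnS.
Qed.

Lemma series_mul_1subX_exp (V : comNzRingType) (a : nat -> V) j :
  series_mul a (fun n => ((1 - 'X) ^+ j : {poly V})`_n) = iter j bdiff a.
Proof.
elim: j => [|j IHj].
  apply: funext => n; rewrite /series_mul big_ord_recr /= subnn coef1 eqxx mulr1.
  by rewrite big1 ?add0r // => i _; rewrite coef1 subn_eq0 leqNgt ltn_ord mulr0.
rewrite iterS -IHj -series_mul_bdiff; congr series_mul; apply: funext => n.
by rewrite exprS mulrBl mul1r coefB coefXM; case: n.
Qed.

Theorem theorem4p9 (RR : realType) (R : comNzRingType) (k : nat)
    (lam : forall M : lmodType R, (M -> Prop) -> \bar RR)
    (N : lmodType ({mpoly R[k]})) (V0 : restr N -> Prop) :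
  noetherian R ->
  is_length_function lam ->
  submodule V0 -> fin_gen V0 -> (lam _ V0 < +oo)%E ->
  (forall n : nat, lam _ (SnV n V0) \is a fin_num) /\
  exists p : {poly RR},
    series_eq_frac (fun n : nat => fine (lam _ (SnV n V0))) p ((1 - 'X) ^+ k.+1).
Proof.
move=> noethR lamL sV0 [m [g V0_g]] finV0; split=> [n|].
  exact: length_SnV_fin lamL sV0 finV0 V0_g n.
have [D evD] := ev_poly_length_SnV lamL sV0 finV0 V0_g noethR.
exists (\poly_(i < D) iter k.+1 bdiff (fun n => fine (lam _ (SnV n V0))) i).
rewrite /series_eq_frac series_mul_1subX_exp; apply: funext => n.
by rewrite coef_poly; case: ltnP => // le_Dn; rewrite evD.
Qed.
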